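(* Let $u_0,\dots,u_4$ be complex numbers with $M_i(U)\neq0$ for all $i$, and let $Y\subset\mathbb{P}^4=\mathrm{Proj}\,\mathbb{C}[v_0,\dots,v_4]$ be the quintic $\sum_{i=0}^4M_i(U)v_i^5=0$ (the image of the Fermat quintic under a diagonal rescaling of coordinates). Let $P=[1:1:1:1:1]$, $Q=[u_0:\dots:u_4]$ (both lying on $Y$), and let $\Lambda$ be the plane $\sum_iM_i(U)v_i=0,\ \sum_iM_i(U)u_i^4v_i=0$. For $b=(b_0,\dots,b_5)\in\mathbb{C}^6$ consider the conic $C_b$, the image of $\gamma_b:\mathbb{P}^1\to\mathbb{P}^4$, $\gamma_b([t:s])=[t^2+b_its+u_ib_5^2s^2]_{i=0,\dots,4}$, which passes through $P=\gamma_b([1:0])$ and $Q=\gamma_b([0:1])$, and let $B=[b_0:\dots:b_4]$. Then the condition $C_b\subset\Lambda$ and $C_b\cdot(Y\cap\Lambda)\ge 3P+3Q$ in $\Lambda$ is equivalent to $B\in\Lambda\cap\Gamma_U\cap\Gamma_{\iota(U)}$, where $\Gamma_U$ and $\Gamma_{\iota(U)}$ are the quadrics in $\mathbb{P}^4$ given by $\sum_{i=0}^4M_i(U)v_i^2=0$ and $\sum_{i=0}^4M_i(U)u_i^3v_i^2=0$ respectively.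
   Context: For $U=(u_0,\dots,u_4)$: for each $i$, $e_1(i),e_2(i),e_3(i)$ denote the elementary symmetric polynomials in the four variables $\{u_j\}_{j\neq i}$; $d_i=\prod_{j,k\neq i,\,j>k}(u_j-u_k)$; $n_i=e_2(i)^2-e_1(i)e_3(i)$; $M_i(U)=(-1)^id_in_i$. These satisfy $\sum_iM_i(U)u_i^k=0$ for $k\in\{0,1,4,5\}$. For a plane curve $Z\subset\Lambda$ and a curve $C\subset\Lambda$, $C\cdot Z\ge 3P+3Q$ means the local intersection multiplicities of $C$ and $Z$ at $P$ and at $Q$ are each at least $3$. *)

From mathcomp Require Import all_boot all_algebra complex.
From mathcomp Require Import Rstruct.
Set Implicit Arguments. Unset Strict Implicit. Unset Printing Implicit Defensive.
Import GRing.Theory.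
Local Open Scope ring_scope.

Definition C : fieldType := (Rdefinitions.R)[i].

Definition esym_i (u : 'I_5 -> C) (k : nat) (i : 'I_5) : C :=
  \sum_(A : {set 'I_5} | (i \notin A) && (#|A| == k)) \prod_(j in A) u j.

Definition d_i (u : 'I_5 -> C) (i : 'I_5) : C :=
  \prod_(j : 'I_5 | j != i) \prod_(k : 'I_5 | (k != i) && (k < j)%N) (u j - u k).

Definition n_i (u : 'I_5 -> C) (i : 'I_5) : C :=
  esym_i u 2 i ^+ 2 - esym_i u 1 i * esym_i u 3 i.

Definition M (u : 'I_5 -> C) (i : 'I_5) : C :=
  (-1) ^+ i * d_i u i * n_i u i.

Definition quinticY (u : 'I_5 -> C) (v : 'I_5 -> C) : C :=
  \sum_i M u i * v i ^+ 5.
Definition quinticY_poly (u : 'I_5 -> C) (v : 'I_5 -> {poly C}) : {poly C} :=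
  \sum_i M u i *: v i ^+ 5.

Definition lam1 (u : 'I_5 -> C) (v : 'I_5 -> C) : C := \sum_i M u i * v i.
Definition lam2 (u : 'I_5 -> C) (v : 'I_5 -> C) : C :=
  \sum_i M u i * u i ^+ 4 * v i.
Definition in_Lambda (u : 'I_5 -> C) (v : 'I_5 -> C) : Prop :=
  lam1 u v = 0 /\ lam2 u v = 0.

Definition GammaU (u : 'I_5 -> C) (v : 'I_5 -> C) : C :=
  \sum_i M u i * v i ^+ 2.
Definition GammaIotaU (u : 'I_5 -> C) (v : 'I_5 -> C) : C :=
  \sum_i M u i * u i ^+ 3 * v i ^+ 2.

Definition bB (b : 'I_6 -> C) (i : 'I_5) : C := b (widen_ord (leqnSn 5) i).
Definition b5 (b : 'I_6 -> C) : C := b ord_max.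

Definition gamma (u : 'I_5 -> C) (b : 'I_6 -> C) (t s : C) (i : 'I_5) : C :=
  t ^+ 2 + bB b i * t * s + u i * b5 b ^+ 2 * s ^+ 2.

(* gamma_b in the affine chart t = 1 of P^1 around [1:0] (local parameter s,
   written 'X), and in the chart s = 1 around [0:1] (local parameter t). *)
Definition gamma_chartP (u : 'I_5 -> C) (b : 'I_6 -> C) (i : 'I_5) : {poly C} :=
  1 + bB b i *: 'X + (u i * b5 b ^+ 2) *: 'X ^+ 2.
Definition gamma_chartQ (u : 'I_5 -> C) (b : 'I_6 -> C) (i : 'I_5) : {poly C} :=
  'X ^+ 2 + bB b i *: 'X + (u i * b5 b ^+ 2)%:P.

Definition conic_in_Lambda (u : 'I_5 -> C) (b : 'I_6 -> C) : Prop :=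
  forall t s : C, in_Lambda u (gamma u b t s).

Definition vanish_order_ge (k : nat) (p : {poly C}) : bool := 'X ^+ k %| p.

(* Local intersection multiplicity (in Lambda) of C_b with Y cap Lambda at
   P = gamma_b([1:0]) (resp. Q = gamma_b([0:1])) is at least k:
   the pullback of the quintic equation along gamma_b vanishes to order >= k
   at the corresponding parameter. *)
Definition int_mult_P_ge (u : 'I_5 -> C) (b : 'I_6 -> C) (k : nat) : bool :=
  vanish_order_ge k (quinticY_poly u (gamma_chartP u b)).
Definition int_mult_Q_ge (u : 'I_5 -> C) (b : 'I_6 -> C) (k : nat) : bool :=
  vanish_order_ge k (quinticY_poly u (gamma_chartQ u b)).

From mathcomp Require Import all_boot all_algebra complex.
From mathcomp Require Import ring Rstruct.
Import GRing.Theory.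
Local Open Scope ring_scope.

(* Along gamma_b the linear forms of Lambda and the quintic pull back to
   polynomials whose low-order coefficients are, up to the units 5, 10 and
   powers of b_5, either the moments sum_i M_i(U) u_i^k with k in {0,1,4,5},
   which vanish, or the values at B of lambda_1, lambda_2, Gamma_U and
   Gamma_iota(U): lambda_j(gamma_b(t,s)) = ts lambda_j(B), the pullback of Y
   is 5 lambda_1(B) s + 10 Gamma_U(B) s^2 + O(s^3) near P and
   5 b_5^8 lambda_2(B) t + 10 b_5^6 Gamma_iota(U)(B) t^2 + O(t^3) near Q.
   The vanishing of the moments is a polynomial identity, checked by writing
   each M_i(U) explicitly in the four u_j, j <> i. *)

(* Keeps [/=] from unfolding [C] to [complex R], where [ring] no longer
   finds its ring structure. *)
#[local] Arguments C : simpl never.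

Notation o0 := (@Ordinal 5 0 isT).
Notation o1 := (@Ordinal 5 1 isT).
Notation o2 := (@Ordinal 5 2 isT).
Notation o3 := (@Ordinal 5 3 isT).
Notation o4 := (@Ordinal 5 4 isT).

Lemma big_ord5 (R : Type) (idx : R) (op : Monoid.law idx) (F : 'I_5 -> R) :
  \big[op/idx]_(j < 5) F j =
  op (F o0) (op (F o1) (op (F o2) (op (F o3) (op (F o4) idx)))).
Proof.
rewrite !big_ord_recl big_ord0.
by do 5 (congr (op (F _) _); first exact/val_inj).
Qed.

Lemma big_ord5_cond (R : Type) (idx : R) (op : Monoid.law idx)
    (P : pred 'I_5) (F : 'I_5 -> R) :
  let c j := if P j then F j else idx in
  \big[op/idx]_(j < 5 | P j) F j =
  op (c o0) (op (c o1) (op (c o2) (op (c o3) (op (c o4) idx)))).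
Proof. by rewrite big_mkcond big_ord5. Qed.

Lemma coef_prod_scaleXD1 (R : comNzRingType) (I : finType) (v : I -> R) k :
  (\prod_j (v j *: 'X + 1))`_k = \sum_(A : {set I} | #|A| == k) \prod_(j in A) v j.
Proof.
rewrite bigA_distr coef_sum [RHS]big_mkcond.
apply: eq_bigr => A _.
rewrite -big_mkcond scaler_prod prodr_const coefZ coefXn.
by case: eqP => [->|]; rewrite ?eqxx ?mulr1 ?mulr0 // => /nesym/eqP/negbTE->.
Qed.

Lemma esym_iE (u : 'I_5 -> C) k i :
  esym_i u k i = (\prod_j ((if j == i then 0 else u j) *: 'X + 1))`_k.
Proof.
rewrite coef_prod_scaleXD1 /esym_i [LHS]big_mkcond [RHS]big_mkcond.
apply: eq_bigr => A _; have [iA | iA] := boolP (i \in A).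
  by rewrite andFb; case: ifP => // _; rewrite (bigD1 i) // eqxx; exact/esym/mul0r.
rewrite andTb; case: ifP => // _; apply: eq_bigr => j jA.
by case: eqP => // eji; rewrite -eji jA in iA.
Qed.

Lemma coef0_scaleXD1_mul (R : nzRingType) (a : R) (p : {poly R}) :
  ((a *: 'X + 1) * p)`_0 = p`_0.
Proof. by rewrite mulrDl mul1r coefD -scalerAl coefZ coefXM /= mulr0 add0r. Qed.

Lemma coefS_scaleXD1_mul (R : nzRingType) (a : R) (p : {poly R}) k :
  ((a *: 'X + 1) * p)`_k.+1 = p`_k.+1 + a * p`_k.
Proof. by rewrite mulrDl mul1r coefD -scalerAl coefZ coefXM /= addrC. Qed.

Definition dn4 {R : comNzRingType} (a b c d : R) : R :=
  (b - a) * (c - a) * (d - a) * (c - b) * (d - b) * (d - c) *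
  ((a*b + a*c + a*d + b*c + b*d + c*d) ^+ 2
   - (a + b + c + d) * (a*b*c + a*b*d + a*c*d + b*c*d)).

Lemma M_ord5 (u : 'I_5 -> C) :
  [/\ M u o0 = dn4 (u o1) (u o2) (u o3) (u o4),
      M u o1 = - dn4 (u o0) (u o2) (u o3) (u o4),
      M u o2 = dn4 (u o0) (u o1) (u o3) (u o4),
      M u o3 = - dn4 (u o0) (u o1) (u o2) (u o4)
    & M u o4 = dn4 (u o0) (u o1) (u o2) (u o3)].
Proof.
split; rewrite /M /d_i /n_i !esym_iE !big_ord5 !coefS_scaleXD1_mul
  !coef0_scaleXD1_mul !coef1 !big_ord5_cond /= /dn4; ring.
Qed.

Definition Mmoment (u : 'I_5 -> C) (k : nat) : C := \sum_i M u i * u i ^+ k.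

Lemma Mmoment_eq0 u k : k \in [:: 0; 1; 4; 5]%N -> Mmoment u k = 0.
Proof.
rewrite /Mmoment big_ord5; have [-> -> -> -> ->] := M_ord5 u.
by rewrite !inE => /or4P[]/eqP->; rewrite /= /dn4; ring.
Qed.

Section QuadraticPower.
Context {R : comNzRingType} (a0 a1 a2 : R).

Lemma coef_quadratic_mul (p : {poly R}) k :
  ((a0%:P + a1 *: 'X + a2 *: 'X^2) * p)`_k =
  a0 * p`_k + (if k is k'.+1 then a1 * p`_k' else 0)
            + (if k is k'.+2 then a2 * p`_k' else 0).
Proof.
rewrite !mulrDl -!scalerAl !coefD coefCM !coefZ coefXM coefXnM.
by case: k => [|[|k]] /=; rewrite ?mulr0 ?subn2.
Qed.

Lemma coef_quadratic_exp n :
  let q := a0%:P + a1 *: 'X + a2 *: 'X^2 in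
  [/\ (q ^+ n)`_0 = a0 ^+ n,
      (q ^+ n)`_1 = n%:R * a0 ^+ n.-1 * a1
    & (q ^+ n)`_2 = 'C(n, 2)%:R * a0 ^+ n.-2 * a1 ^+ 2 + n%:R * a0 ^+ n.-1 * a2].
Proof.
elim: n => [|n [IH0 IH1 IH2]] q.
  by rewrite expr0 !coef1 /= !mul0r add0r.
rewrite exprS !coef_quadratic_mul IH0 IH1 IH2 /= binS bin1 natrD addr0.
case: n {IH0 IH1 IH2} => [|[|n]] /=; rewrite -?natr1 ?exprS.
- by rewrite bin_small //; split; ring.
- by rewrite bin_small //; split; ring.
- by split; ring.
Qed.

End QuadraticPower.

Lemma dvdp_Xn_coef (R : fieldType) n (p : {poly R}) :
  ('X^n %| p) = all (fun i => p`_i == 0) (iota 0 n).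
Proof.
rewrite /dvdp -Pdiv.IdomainMonic.take_poly_modp; apply/eqP/allP => [p0 i | p0].
  rewrite mem_iota add0n => /andP[_ ltin].
  by have := congr1 (coefp i) p0; rewrite /= coef_take_poly ltin coef0 => ->.
apply/polyP => i; rewrite coef_take_poly coef0.
by case: ifP => // ltin; apply/eqP/p0; rewrite mem_iota.
Qed.

Lemma vanish_order_ge3E (p : {poly C}) :
  vanish_order_ge 3 p = [&& p`_0 == 0, p`_1 == 0 & p`_2 == 0].
Proof. by rewrite /vanish_order_ge dvdp_Xn_coef /= andbT. Qed.

Lemma natrC_eq0 n : (n%:R == 0 :> C) = (n == 0)%N.
Proof. exact: (@Num.Theory.pnatr_eq0 (Rdefinitions.R)[i]). Qed.

Lemma coef_quinticY_poly u (g : 'I_5 -> {poly C}) k :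
  (quinticY_poly u g)`_k = \sum_i M u i * (g i ^+ 5)`_k.
Proof. by rewrite /quinticY_poly coef_sum; apply: eq_bigr => i _; rewrite coefZ. Qed.

Lemma pullbackP_coef u b :
  let p := quinticY_poly u (gamma_chartP u b) in
  [/\ p`_0 = Mmoment u 0, p`_1 = 5%:R * lam1 u (bB b)
    & p`_2 = 10%:R * GammaU u (bB b) + 5%:R * b5 b ^+ 2 * Mmoment u 1].
Proof.
rewrite /Mmoment /lam1 /GammaU !coef_quinticY_poly !mulr_sumr -big_split.
split; apply: eq_bigr => i _; rewrite /gamma_chartP -polyC1.
all: have [c0 c1 c2] := coef_quadratic_exp 1 (bB b i) (u i * b5 b ^+ 2) 5.
all: by rewrite ?c0 ?c1 ?c2 ?bin2 /=; ring.
Qed.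

Lemma gamma_chartQE u b i :
  gamma_chartQ u b i = (u i * b5 b ^+ 2)%:P + bB b i *: 'X + 1 *: 'X^2.
Proof. by rewrite /gamma_chartQ scale1r addrC (addrC ('X^2)) addrA. Qed.

Lemma pullbackQ_coef u b :
  let p := quinticY_poly u (gamma_chartQ u b) in
  [/\ p`_0 = b5 b ^+ 10 * Mmoment u 5, p`_1 = 5%:R * b5 b ^+ 8 * lam2 u (bB b)
    & p`_2 = 10%:R * b5 b ^+ 6 * GammaIotaU u (bB b)
             + 5%:R * b5 b ^+ 8 * Mmoment u 4].
Proof.
rewrite /Mmoment /lam2 /GammaIotaU !coef_quinticY_poly !mulr_sumr -big_split.
split; apply: eq_bigr => i _.
all: rewrite gamma_chartQE.
all: have [c0 c1 c2] := coef_quadratic_exp (u i * b5 b ^+ 2) (bB b i) 1 5.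
all: by rewrite ?c0 ?c1 ?c2 ?bin2 /=; ring.
Qed.

Lemma lam1_gamma u b t s :
  lam1 u (gamma u b t s) =
  t ^+ 2 * Mmoment u 0 + t * s * lam1 u (bB b) + b5 b ^+ 2 * s ^+ 2 * Mmoment u 1.
Proof.
rewrite /lam1 /Mmoment !mulr_sumr -!big_split.
by apply: eq_bigr => i _; rewrite /gamma /=; ring.
Qed.

Lemma lam2_gamma u b t s :
  lam2 u (gamma u b t s) =
  t ^+ 2 * Mmoment u 4 + t * s * lam2 u (bB b) + b5 b ^+ 2 * s ^+ 2 * Mmoment u 5.
Proof.
rewrite /lam2 /Mmoment !mulr_sumr -!big_split.
by apply: eq_bigr => i _; rewrite /gamma /=; ring.
Qed.

Lemma conic_in_LambdaP u b : conic_in_Lambda u b <-> in_Lambda u (bB b).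
Proof.
rewrite /conic_in_Lambda /in_Lambda.
split=> [/(_ 1 1) | [h1 h2] t s]; rewrite lam1_gamma lam2_gamma !Mmoment_eq0 //.
  by rewrite !mul1r !mulr0 !add0r !addr0.
by rewrite h1 h2 !mulr0 !addr0.
Qed.

Lemma int_mult_P_ge3P u b :
  int_mult_P_ge u b 3 <-> lam1 u (bB b) = 0 /\ GammaU u (bB b) = 0.
Proof.
have [c0 c1 c2] := pullbackP_coef u b.
rewrite /int_mult_P_ge vanish_order_ge3E c0 c1 c2 !Mmoment_eq0 // mulr0 addr0 eqxx.
rewrite !mulf_eq0 !natrC_eq0 /=.
by split=> [/andP[/eqP-> /eqP->] | [-> ->]]; rewrite ?eqxx.
Qed.

Lemma int_mult_Q_ge3P u b : b5 b != 0 ->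
  int_mult_Q_ge u b 3 <-> lam2 u (bB b) = 0 /\ GammaIotaU u (bB b) = 0.
Proof.
move=> b5_neq0; have [c0 c1 c2] := pullbackQ_coef u b.
rewrite /int_mult_Q_ge vanish_order_ge3E c0 c1 c2 !Mmoment_eq0 // !mulr0 addr0 eqxx.
rewrite !mulf_eq0 !natrC_eq0 (negbTE b5_neq0) /=.
by split=> [/andP[/eqP-> /eqP->] | [-> ->]]; rewrite ?eqxx.
Qed.

Theorem mainTheorem4 (u : 'I_5 -> C) (b : 'I_6 -> C)
  (hM : forall i : 'I_5, M u i != 0)
  (hb5 : b5 b != 0)              (* gamma_b is defined at [0:1], Q = gamma_b([0:1]) *)
  (hB : exists i : 'I_5, bB b i != 0)     (* B = [b_0 : ... : b_4] is a point of P^4 *) :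
  (conic_in_Lambda u b /\ int_mult_P_ge u b 3 /\ int_mult_Q_ge u b 3)
  <->
  (in_Lambda u (bB b) /\ GammaU u (bB b) = 0 /\ GammaIotaU u (bB b) = 0).
Proof.
move: (conic_in_LambdaP u b) (int_mult_P_ge3P u b) (int_mult_Q_ge3P u b hb5).
rewrite /in_Lambda; tauto.
Qed.
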